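(* Let $X$ be a Polish space and $\mathbf f=(f_n)_n$ a sequence of continuous real-valued functions on $X$ which is relatively compact in $\mathcal B_1(X)$. Then for every $L\in[\mathbb N]$: $L\in\mathcal L_{\mathbf f}$ if and only if the tree $T_L$ is well-founded.
   Context: $\mathcal B_1(X)$ is the set of real-valued Baire-1 functions on $X$; $(f_n)_n$ is relatively compact in $\mathcal B_1(X)$ if the closure of $\{f_n\}$ in $\mathbb R^X$ (pointwise topology) is compact and contained in $\mathcal B_1(X)$. $[\mathbb N]$ is the set of infinite subsets of $\mathbb N$; $\mathcal L_{\mathbf f}=\{L\in[\mathbb N]:(f_n)_{n\in L}\text{ converges pointwise}\}$. Fix a compatible complete metric on $X$, a countable dense $D\subseteq X$ and an enumeration $(B_n)_n$ of all closed balls with centers in $D$ and rational radii. A finite sequence $w=(l_0,\dots,l_k)\in\mathbb N^{<\mathbb N}$ is acceptable if $B_{l_0}\supseteq\dots\supseteq B_{l_k}$ and $\mathrm{diam}(B_{l_i})\le\frac1{i+1}$ for all $i$; the empty sequence is acceptable. $\mathrm{Fin}$ is the set of finite subsets of $\mathbb N$, $\mathrm{Fin}(L)$ those contained in $L$; $F<G$ means $\max F<\min G$. A tree on $\mathbb N\times\mathrm{Fin}\times\mathbb N$ is identified with a set of triples $(s,t,w)$ of finite sequences of equal length, closed under taking initial segments of equal length; it is well-founded if it has no infinite branch. For $d\in\mathbb N$ and $L\in[\mathbb N]$, $T^d_L$ is the set of $(s,t,w)$ with $|s|=|t|=|w|=k$ such that $s=(n_0<\dots<n_{k-1})$ with $n_i\in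 L$, $t=(F_0<\dots<F_{k-1})$ with $F_i\in\mathrm{Fin}(L)$, $w=(l_0,\dots,l_{k-1})$ acceptable, and for every $i<k$ and every $z\in B_{l_i}$ there is $m_i\in F_i$ with $|f_{n_i}(z)-f_{m_i}(z)|>\frac1{d+1}$. Then $T_L$ consists of the empty triple together with all $(d^\frown s',\{d\}^\frown t',d^\frown w')$ with $d\in\mathbb N$ and $(s',t',w')\in T^d_L$. *)

From Stdlib Require Import Reals QArith List.
Open Scope R_scope.

(* ---------- metric space structure (Polish space with a fixed compatible
   complete metric d and a countable dense set D) ---------- *)

Definition is_metric {X : Type} (d : X -> X -> R) : Prop :=
  (forall x y, 0 <= d x y) /\
  (forall x y, d x y = 0 <-> x = y) /\
  (forall x y, d x y = d y x) /\
  (forall x y z, d x z <= d x y + d y z).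

Definition cauchy {X : Type} (d : X -> X -> R) (u : nat -> X) : Prop :=
  forall eps, eps > 0 -> exists N, forall m n, (N <= m)%nat -> (N <= n)%nat ->
    d (u m) (u n) < eps.

Definition converges_to {X : Type} (d : X -> X -> R) (u : nat -> X) (x : X) : Prop :=
  forall eps, eps > 0 -> exists N, forall n, (N <= n)%nat -> d (u n) x < eps.

Definition complete {X : Type} (d : X -> X -> R) : Prop :=
  forall u, cauchy d u -> exists x, converges_to d u x.

Definition dense_seq {X : Type} (d : X -> X -> R) (D : nat -> X) : Prop :=
  forall x eps, eps > 0 -> exists k, d x (D k) < eps.

Definition continuous_on_metric {X : Type} (d : X -> X -> R) (g : X -> R) : Prop :=
  forall x eps, eps > 0 -> exists delta, delta > 0 /\
    forall y, d x y < delta -> Rabs (g y - g x) < eps.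

Definition cball {X : Type} (d : X -> X -> R) (c : X) (r : R) (z : X) : Prop :=
  d c z <= r.

Definition ball_enumeration {X : Type} (d : X -> X -> R) (D : nat -> X)
  (B : nat -> X -> Prop) : Prop :=
  (forall n, exists k (q : Q), (0 < q)%Q /\ forall z, B n z <-> cball d (D k) (Q2R q) z) /\
  (forall k (q : Q), (0 < q)%Q -> exists n, forall z, B n z <-> cball d (D k) (Q2R q) z).

Definition baire1 {X : Type} (d : X -> X -> R) (g : X -> R) : Prop :=
  exists gs : nat -> X -> R, (forall n, continuous_on_metric d (gs n)) /\
    forall x, Un_cv (fun n => gs n x) (g x).

(* basic neighbourhood of g in R^X (pointwise/product topology) *)
Definition pw_nbhd {X : Type} (g : X -> R) (xs : list X) (eps : R) (h : X -> R) : Prop :=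
  forall x, In x xs -> Rabs (h x - g x) < eps.

Definition pw_open {X : Type} (U : (X -> R) -> Prop) : Prop :=
  forall g, U g -> exists xs eps, eps > 0 /\ forall h, pw_nbhd g xs eps h -> U h.

Definition pw_closure {X : Type} (A : (X -> R) -> Prop) (g : X -> R) : Prop :=
  forall xs eps, eps > 0 -> exists h, A h /\ pw_nbhd g xs eps h.

Definition pw_compact {X : Type} (K : (X -> R) -> Prop) : Prop :=
  forall (I : Type) (U : I -> (X -> R) -> Prop),
    (forall i, pw_open (U i)) ->
    (forall g, K g -> exists i, U i g) ->
    exists is : list I, forall g, K g -> exists i, In i is /\ U i g.

Definition range_seq {X : Type} (f : nat -> X -> R) (h : X -> R) : Prop :=
  exists n, h = f n.

Definition rel_compact_B1 {X : Type} (d : X -> X -> R) (f : nat -> X -> R) : Prop :=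
  pw_compact (pw_closure (range_seq f)) /\
  (forall g, pw_closure (range_seq f) g -> baire1 d g).

Definition infinite_set (L : nat -> Prop) : Prop :=
  forall N, exists n, (N <= n)%nat /\ L n.

Definition converges_along {X : Type} (f : nat -> X -> R) (L : nat -> Prop) : Prop :=
  forall x, exists l, forall eps, eps > 0 -> exists N, forall n,
    L n -> (N <= n)%nat -> Rabs (f n x - l) < eps.

(* Finite subsets of N are represented by lists (only membership matters). *)

Definition acceptable {X : Type} (d : X -> X -> R) (B : nat -> X -> Prop)
  (w : list nat) : Prop :=
  (forall i, (S i < length w)%nat ->
     forall z, B (nth (S i) w O) z -> B (nth i w O) z) /\
  (forall i, (i < length w)%nat ->
     forall y z, B (nth i w O) y -> B (nth i w O) z -> d y z <= / INR (S i)).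

Definition Td {X : Type} (d : X -> X -> R) (B : nat -> X -> Prop)
  (f : nat -> X -> R) (L : nat -> Prop) (dd : nat)
  (s : list nat) (t : list (list nat)) (w : list nat) : Prop :=
  length s = length w /\ length t = length w /\
  (forall i j, (i < j)%nat -> (j < length s)%nat -> (nth i s O < nth j s O)%nat) /\
  (forall i, (i < length s)%nat -> L (nth i s O)) /\
  (forall i j, (i < j)%nat -> (j < length t)%nat ->
     forall a b, In a (nth i t nil) -> In b (nth j t nil) -> (a < b)%nat) /\
  (forall i, (i < length t)%nat -> forall a, In a (nth i t nil) -> L a) /\
  acceptable d B w /\
  (forall i, (i < length w)%nat -> forall z, B (nth i w O) z ->
     exists m, In m (nth i t nil) /\
       Rabs (f (nth i s O) z - f m z) > / INR (S dd)).

Definition TL {X : Type} (d : X -> X -> R) (B : nat -> X -> Prop)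
  (f : nat -> X -> R) (L : nat -> Prop)
  (s : list nat) (t : list (list nat)) (w : list nat) : Prop :=
  (s = nil /\ t = nil /\ w = nil) \/
  exists dd s' t' w', s = dd :: s' /\ t = (dd :: nil) :: t' /\ w = dd :: w' /\
    Td d B f L dd s' t' w'.

Definition prefix {A : Type} (u : nat -> A) (k : nat) : list A :=
  map u (seq 0 k).

Definition well_founded_tree
  (T : list nat -> list (list nat) -> list nat -> Prop) : Prop :=
  ~ exists (sg : nat -> nat) (tau : nat -> list nat) (om : nat -> nat),
      forall k, T (prefix sg k) (prefix tau k) (prefix om k).

From Stdlib Require Import Reals QArith Qreals List Lia Lra Classical ClassicalEpsilon.
Open Scope R_scope.

(* An infinite branch of T_L is the same thing as a number dd together with
   infinite sequences (s, t, w) satisfying the defining conditions of T^dd_L at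
   every level; we call such data a [Td_branch] and prove this equivalence
   first (bookkeeping with finite prefixes).
   - Convergence excludes branches: the balls B_{w_i} are nested with
     diameters <= 1/(i+1), so by completeness they share a point z; at z the
     branch provides, arbitrarily far out in L, pairs n, m with
     |f_n z - f_m z| > 1/(dd+1), contradicting convergence at z.
   - Divergence yields a branch: if (f_n x)_{n in L} is not Cauchy at some x,
     it oscillates by more than 1/(dd+1) for some dd.  Each oscillating pair
     persists on a neighbourhood of x by continuity, so it persists on a small
     ball B_l around x; choosing these stages recursively, with each ball inside
     the previous one, gives a branch of T^dd_L. *)

Lemma prefix_S {A : Type} (u : nat -> A) (k : nat) :
  prefix u (S k) = u O :: prefix (fun i => u (S i)) k.
Proof. unfold prefix. simpl. rewrite <- seq_shift, map_map. reflexivity. Qed.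

Lemma prefix_length {A : Type} (u : nat -> A) (k : nat) : length (prefix u k) = k.
Proof. unfold prefix. now rewrite length_map, length_seq. Qed.

Lemma nth_prefix {A : Type} (u : nat -> A) (k i : nat) (dflt : A) :
  (i < k)%nat -> nth i (prefix u k) dflt = u i.
Proof.
  intros Hik. unfold prefix.
  rewrite nth_indep with (d' := u O) by (rewrite length_map, length_seq; lia).
  rewrite map_nth, seq_nth by lia. reflexivity.
Qed.

Lemma strictly_increasing (u : nat -> nat) :
  (forall i, (u i < u (S i))%nat) -> forall i j, (i < j)%nat -> (u i < u j)%nat.
Proof.
  intros Hstep i j Hij. induction Hij as [|j _ IH]; [apply Hstep|].
  specialize (Hstep j). lia.
Qed.

Lemma inv_succ_pos (n : nat) : 0 < / INR (S n).
Proof. apply Rinv_0_lt_compat, lt_0_INR. lia. Qed.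

Lemma small_inv_succ (e : R) : 0 < e -> exists N, / INR (S N) < e.
Proof.
  intros He. destruct (archimed_cor1 e He) as [[|N] [HN HN0]]; [lia|].
  now exists N.
Qed.

Lemma small_rational (e : R) : 0 < e -> exists q : Q, (0 < q)%Q /\ 0 < Q2R q <= e.
Proof.
  intros He. destruct (small_inv_succ e He) as [N HN].
  exists (1 # Pos.of_succ_nat N).
  assert (E : Q2R (1 # Pos.of_succ_nat N) = / INR (S N)).
  { unfold Q2R. rewrite INR_IZR_INZ. simpl. ring. }
  rewrite E. pose proof (inv_succ_pos N).
  split; [unfold Qlt; simpl; lia | lra].
Qed.

Definition cauchy_along (u : nat -> R) (L : nat -> Prop) : Prop :=
  forall eps, eps > 0 -> exists N, forall n m, L n -> L m ->
    (N <= n)%nat -> (N <= m)%nat -> Rabs (u n - u m) < eps.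

Definition oscillates_along (u : nat -> R) (L : nat -> Prop) (eps : R) : Prop :=
  forall N, exists n m, (N <= n)%nat /\ (N <= m)%nat /\ L n /\ L m /\
    Rabs (u n - u m) > eps.

Lemma cauchy_along_converges (u : nat -> R) (L : nat -> Prop) :
  infinite_set L -> cauchy_along u L ->
  exists l, forall eps, eps > 0 -> exists N, forall n, L n -> (N <= n)%nat ->
    Rabs (u n - l) < eps.
Proof.
  intros HL Hcau.
  destruct (choice (fun N n => (N <= n)%nat /\ L n) HL) as [phi Hphi].
  assert (Hsub : Cauchy_crit (fun k => u (phi k))).
  { intros eps He. destruct (Hcau eps He) as [N HN]. exists N. intros n m Hn Hm.
    unfold Rdist. destruct (Hphi n), (Hphi m). apply HN; auto; lia. }
  destruct (R_complete _ Hsub) as [l Hl]. exists l. intros eps He.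
  destruct (Hcau (eps / 2) ltac:(lra)) as [N1 HN1].
  destruct (Hl (eps / 2) ltac:(lra)) as [N2 HN2].
  exists (max N1 N2). intros n Ln Hn.
  destruct (Hphi (max N1 N2)) as [Hle Hin].
  specialize (HN1 n (phi (max N1 N2)) Ln Hin ltac:(lia) ltac:(lia)).
  specialize (HN2 (max N1 N2) ltac:(lia)). unfold Rdist in HN2.
  pose proof (Rdist_tri (u n) l (u (phi (max N1 N2)))) as Htri.
  unfold Rdist in Htri. lra.
Qed.

Lemma not_cauchy_oscillates (u : nat -> R) (L : nat -> Prop) :
  ~ cauchy_along u L -> exists dd, oscillates_along u L (/ INR (S dd)).
Proof.
  intros Hnc. apply NNPP. intros Hno. apply Hnc. intros eps He.
  destruct (small_inv_succ eps He) as [dd Hdd].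
  assert (Hnot : ~ oscillates_along u L (/ INR (S dd))) by (intro H; apply Hno; exists dd; exact H).
  apply not_all_ex_not in Hnot as [N HN]. exists N. intros n m Ln Lm Hn Hm.
  apply Rnot_le_lt. intros Hge. apply HN. exists n, m. repeat split; auto. lra.
Qed.

Lemma divergence_oscillates {X : Type} (f : nat -> X -> R) (L : nat -> Prop) :
  infinite_set L -> ~ converges_along f L ->
  exists x dd, oscillates_along (fun n => f n x) L (/ INR (S dd)).
Proof.
  intros HL Hdiv. apply NNPP. intros Hno. apply Hdiv. intros x.
  apply cauchy_along_converges; [exact HL|].
  apply NNPP. intros Hnc.
  destruct (not_cauchy_oscillates _ _ Hnc) as [dd Hdd]. apply Hno. eauto.
Qed.

Section Lemma5p10.

Variables (X : Type) (d : X -> X -> R) (D : nat -> X) (B : nat -> X -> Prop).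
Variables (f : nat -> X -> R) (L : nat -> Prop).
Hypothesis Hmet : is_metric d.
Hypothesis Hcompl : complete d.
Hypothesis HD : dense_seq d D.
Hypothesis HB : ball_enumeration d D B.
Hypothesis Hcont : forall n, continuous_on_metric d (f n).

Lemma ball_nonempty (n : nat) : exists z, B n z.
Proof.
  destruct (proj1 HB n) as [k [q [Hq Hball]]]. exists (D k). apply Hball.
  unfold cball. destruct Hmet as [_ [Hzero _]].
  rewrite (proj2 (Hzero (D k) (D k)) eq_refl).
  apply Qlt_Rlt in Hq. unfold Q2R in Hq at 1. simpl in Hq. lra.
Qed.

Lemma ball_closed (n : nat) (u : nat -> X) (z : X) (N0 : nat) :
  converges_to d u z -> (forall j, (N0 <= j)%nat -> B n (u j)) -> B n z.
Proof.
  intros Hlim Hu. destruct (proj1 HB n) as [k [q [_ Hball]]]. apply Hball.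
  unfold cball. apply Rle_plus_epsilon. intros eps He.
  destruct (Hlim eps He) as [N HN]. specialize (HN (max N N0) ltac:(lia)).
  pose proof (proj1 (Hball (u (max N N0))) (Hu (max N N0) ltac:(lia))) as Hin.
  unfold cball in Hin. destruct Hmet as [_ [_ [_ Htri]]].
  pose proof (Htri (D k) (u (max N N0)) z). lra.
Qed.

Lemma small_ball (x : X) (rho : R) : 0 < rho ->
  exists l r, 0 < r /\ (forall y, d x y < r -> B l y) /\
    (forall y z, B l y -> B l z -> d y z <= rho).
Proof.
  intros Hrho. destruct (small_rational (rho / 2) ltac:(lra)) as [q [Hq [Hq0 Hqr]]].
  destruct (HD x (Q2R q / 2) ltac:(lra)) as [k Hk].
  destruct (proj2 HB k q Hq) as [l Hl].
  destruct Hmet as [_ [_ [Hsym Htri]]].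
  exists l, (Q2R q / 2). split; [lra|]. split.
  - intros y Hy. apply Hl. unfold cball.
    pose proof (Htri (D k) x y). rewrite (Hsym (D k) x) in *. lra.
  - intros y z Hy Hz. apply Hl in Hy. apply Hl in Hz. unfold cball in Hy, Hz.
    pose proof (Htri y (D k) z). rewrite (Hsym y (D k)) in *. lra.
Qed.

Lemma nested_balls_meet (w : nat -> nat) :
  (forall i z, B (w (S i)) z -> B (w i) z) ->
  (forall i y z, B (w i) y -> B (w i) z -> d y z <= / INR (S i)) ->
  exists z, forall i, B (w i) z.
Proof.
  intros Hnext Hdiam.
  assert (Hnest : forall i j, (i <= j)%nat -> forall z, B (w j) z -> B (w i) z).
  { intros i j Hij. induction Hij; auto. }
  destruct (choice (fun i z => B (w i) z) (fun i => ball_nonempty (w i))) as [xs Hxs].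
  assert (Hcau : cauchy d xs).
  { intros eps He. destruct (small_inv_succ eps He) as [N HN]. exists N.
    intros m n Hm Hn.
    pose proof (Hdiam N (xs m) (xs n) (Hnest N m Hm _ (Hxs m)) (Hnest N n Hn _ (Hxs n))).
    lra. }
  destruct (Hcompl xs Hcau) as [z Hz]. exists z. intros i.
  apply (ball_closed (w i) xs z i Hz). intros j Hj. exact (Hnest i j Hj _ (Hxs j)).
Qed.

Record Td_branch (dd : nat) (s : nat -> nat) (t : nat -> list nat) (w : nat -> nat)
  : Prop := {
  br_s_incr : forall i j, (i < j)%nat -> (s i < s j)%nat;
  br_s_in : forall i, L (s i);
  br_t_incr : forall i j, (i < j)%nat -> forall a b, In a (t i) -> In b (t j) -> (a < b)%nat;
  br_t_in : forall i a, In a (t i) -> L a;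
  br_nested : forall i z, B (w (S i)) z -> B (w i) z;
  br_diam : forall i y z, B (w i) y -> B (w i) z -> d y z <= / INR (S i);
  br_sep : forall i z, B (w i) z ->
    exists m, In m (t i) /\ Rabs (f (s i) z - f m z) > / INR (S dd)
}.

Lemma Td_prefixes_branch (dd : nat) (s : nat -> nat) (t : nat -> list nat) (w : nat -> nat) :
  (forall k, Td d B f L dd (prefix s k) (prefix t k) (prefix w k)) <-> Td_branch dd s t w.
Proof.
  split.
  - intros H. constructor.
    + intros i j Hij. destruct (H (S j)) as (_ & _ & Hs & _). specialize (Hs i j Hij).
      rewrite prefix_length, !nth_prefix in Hs by lia. apply Hs. lia.
    + intros i. destruct (H (S i)) as (_ & _ & _ & Hs & _). specialize (Hs i).
      rewrite prefix_length, nth_prefix in Hs by lia. apply Hs. lia.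
    + intros i j Hij. destruct (H (S j)) as (_ & _ & _ & _ & Ht & _). specialize (Ht i j Hij).
      rewrite prefix_length, !nth_prefix in Ht by lia. apply Ht. lia.
    + intros i. destruct (H (S i)) as (_ & _ & _ & _ & _ & Ht & _). specialize (Ht i).
      rewrite prefix_length, nth_prefix in Ht by lia. apply Ht. lia.
    + intros i. destruct (H (S (S i))) as (_ & _ & _ & _ & _ & _ & [Hw _] & _). specialize (Hw i).
      rewrite prefix_length, !nth_prefix in Hw by lia. apply Hw. lia.
    + intros i. destruct (H (S i)) as (_ & _ & _ & _ & _ & _ & [_ Hw] & _). specialize (Hw i).
      rewrite prefix_length, nth_prefix in Hw by lia. apply Hw. lia.
    + intros i. destruct (H (S i)) as (_ & _ & _ & _ & _ & _ & _ & Hf). specialize (Hf i).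
      rewrite prefix_length, !nth_prefix in Hf by lia. apply Hf. lia.
  - intros Hbr k. unfold Td, acceptable. rewrite !prefix_length.
    repeat split; intros; rewrite ?nth_prefix in * by lia.
    + now apply (br_s_incr _ _ _ _ Hbr).
    + apply (br_s_in _ _ _ _ Hbr).
    + now apply (br_t_incr _ _ _ _ Hbr i j).
    + now apply (br_t_in _ _ _ _ Hbr i).
    + now apply (br_nested _ _ _ _ Hbr).
    + now apply (br_diam _ _ _ _ Hbr i).
    + now apply (br_sep _ _ _ _ Hbr).
Qed.

Lemma TL_infinite_branch :
  (exists sg tau om, forall k, TL d B f L (prefix sg k) (prefix tau k) (prefix om k)) <->
  (exists dd s t w, Td_branch dd s t w).
Proof.
  split.
  - intros (sg & tau & om & H).
    exists (sg O), (fun i => sg (S i)), (fun i => tau (S i)), (fun i => om (S i)).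
    apply Td_prefixes_branch. intros k. specialize (H (S k)). rewrite !prefix_S in H.
    destruct H as [(Hs & _) | (dd & s' & t' & w' & Es & Et & Ew & HT)]; [discriminate|].
    injection Es as Edd Es. injection Et as _ Et. injection Ew as _ Ew.
    subst dd s' t' w'. exact HT.
  - intros (dd & s & t & w & Hbr).
    exists (fun k => match k with O => dd | S i => s i end),
           (fun k => match k with O => dd :: nil | S i => t i end),
           (fun k => match k with O => dd | S i => w i end).
    intros [|k]; [left; repeat split|].
    right. exists dd, (prefix s k), (prefix t k), (prefix w k). rewrite !prefix_S.
    repeat (split; [reflexivity|]). exact (proj2 (Td_prefixes_branch dd s t w) Hbr k).
Qed.

Lemma branch_indices_grow (dd : nat) (s : nat -> nat) (t : nat -> list nat) (w : nat -> nat) :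
  Td_branch dd s t w -> forall i, (i <= s i)%nat /\ forall a, In a (t i) -> (i <= a)%nat.
Proof.
  intros Hbr i. induction i as [|i [Hs Ht]]; [split; intros; lia|]. split.
  - pose proof (br_s_incr _ _ _ _ Hbr i (S i)). lia.
  - intros a Ha. destruct (ball_nonempty (w i)) as [z Hz].
    destruct (br_sep _ _ _ _ Hbr i z Hz) as [b [Hb _]].
    pose proof (Ht b Hb). pose proof (br_t_incr _ _ _ _ Hbr i (S i) ltac:(lia) b a Hb Ha). lia.
Qed.

(* Convergence excludes branches: at a common point z of the balls, the branch
   yields pairs far out in L that stay more than 1/(dd+1) apart. *)
Lemma branch_diverges (dd : nat) (s : nat -> nat) (t : nat -> list nat) (w : nat -> nat) :
  Td_branch dd s t w -> ~ converges_along f L.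
Proof.
  intros Hbr Hconv.
  destruct (nested_balls_meet w (br_nested _ _ _ _ Hbr) (br_diam _ _ _ _ Hbr)) as [z Hz].
  destruct (Hconv z) as [l Hl]. pose proof (inv_succ_pos dd).
  destruct (Hl (/ INR (S dd) / 2) ltac:(lra)) as [N HN].
  destruct (br_sep _ _ _ _ Hbr N z (Hz N)) as [m [Hm Hsep]].
  destruct (branch_indices_grow _ _ _ _ Hbr N) as [HsN HtN].
  pose proof (HN (s N) (br_s_in _ _ _ _ Hbr N) HsN) as Hn.
  pose proof (HN m (br_t_in _ _ _ _ Hbr N m Hm) (HtN m Hm)) as Hm'.
  pose proof (Rdist_tri (f (s N) z) (f m z) l) as Htri. unfold Rdist in Htri.
  rewrite (Rabs_minus_sym l) in Htri. lra.
Qed.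

Lemma oscillation_persists (g h : X -> R) (x : X) (eps : R) :
  continuous_on_metric d g -> continuous_on_metric d h -> Rabs (g x - h x) > eps ->
  exists delta, delta > 0 /\ forall z, d x z < delta -> Rabs (g z - h z) > eps.
Proof.
  intros Hg Hh Hosc. set (a := Rabs (g x - h x) - eps).
  destruct (Hg x (a / 2) ltac:(unfold a; lra)) as [d1 [Hd1 H1]].
  destruct (Hh x (a / 2) ltac:(unfold a; lra)) as [d2 [Hd2 H2]].
  exists (Rmin d1 d2). split; [now apply Rmin_glb_lt|]. intros z Hz.
  specialize (H1 z (Rlt_le_trans _ _ _ Hz (Rmin_l d1 d2))).
  specialize (H2 z (Rlt_le_trans _ _ _ Hz (Rmin_r d1 d2))).
  assert (Htri : Rabs (g x - h x) <= Rabs (g z - h z) + Rabs (g z - g x) + Rabs (h z - h x)).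
  { replace (g x - h x) with ((g z - h z) + (- (g z - g x) + (h z - h x))) by ring.
    rewrite <- (Rabs_Ropp (g z - g x)), Rplus_assoc.
    eapply Rle_trans; [apply Rabs_triang|]. apply Rplus_le_compat_l, Rabs_triang. }
  unfold a in *. lra.
Qed.

Record stage : Type := Stage { st_n : nat; st_m : nat; st_ball : nat; st_rad : R }.

Record good_stage (x : X) (eps : R) (i N : nat) (rho : R) (st : stage) : Prop := {
  gs_n_ge : (N <= st_n st)%nat;
  gs_m_ge : (N <= st_m st)%nat;
  gs_n_in : L (st_n st);
  gs_m_in : L (st_m st);
  gs_rad_pos : 0 < st_rad st;
  gs_inner : forall y, d x y < st_rad st -> B (st_ball st) y;
  gs_outer : forall y, B (st_ball st) y -> d x y < rho;
  gs_diam : forall y z, B (st_ball st) y -> B (st_ball st) z -> d y z <= / INR (S i);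
  gs_sep : forall z, B (st_ball st) z -> Rabs (f (st_n st) z - f (st_m st) z) > eps
}.

Lemma good_stage_exists (x : X) (eps : R) :
  oscillates_along (fun n => f n x) L eps ->
  forall i N rho, 0 < rho -> exists st, good_stage x eps i N rho st.
Proof.
  intros Hosc i N rho Hrho. destruct (Hosc N) as (n & m & Hn & Hm & Ln & Lm & Hnm).
  destruct (oscillation_persists (f n) (f m) x eps (Hcont n) (Hcont m) Hnm)
    as [delta [Hdelta Hnear]].
  set (rho' := Rmin (Rmin rho delta) (/ INR (S i))).
  assert (Hrho' : 0 < rho' /\ rho' <= rho /\ rho' <= delta /\ rho' <= / INR (S i)).
  { pose proof (inv_succ_pos i). unfold rho'.
    pose proof (Rmin_l (Rmin rho delta) (/ INR (S i))).
    pose proof (Rmin_r (Rmin rho delta) (/ INR (S i))).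
    pose proof (Rmin_l rho delta). pose proof (Rmin_r rho delta).
    repeat split; try lra. repeat apply Rmin_glb_lt; lra. }
  destruct Hrho' as (Hpos & Hle_rho & Hle_delta & Hle_inv).
  destruct (small_ball x (rho' / 2) ltac:(lra)) as (l & r & Hr & Hin & Hdiam).
  assert (Hx : B l x).
  { apply Hin. destruct Hmet as [_ [Hzero _]]. rewrite (proj2 (Hzero x x) eq_refl). exact Hr. }
  exists (Stage n m l r). constructor; cbn [st_n st_m st_ball st_rad]; auto.
  - intros y Hy. specialize (Hdiam x y Hx Hy). lra.
  - intros y z Hy Hz. specialize (Hdiam y z Hy Hz). lra.
  - intros z Hz. apply Hnear. specialize (Hdiam x z Hx Hz). lra.
Qed.

(* The recursion: stage i+1 lies beyond the indices of stage i, with its ball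
   inside the open ball of radius [st_rad] of stage i. *)
Fixpoint build_stages (next : nat * nat * R -> stage) (i : nat) : stage :=
  match i with
  | O => next (O, O, 1)
  | S j => let st := build_stages next j in
           next (S j, S (max (st_n st) (st_m st)), st_rad st)
  end.

Lemma oscillation_yields_branch (x : X) (dd : nat) :
  oscillates_along (fun n => f n x) L (/ INR (S dd)) ->
  exists s t w, Td_branch dd s t w.
Proof.
  intros Hosc. set (eps := / INR (S dd)).
  assert (Hex : forall p : nat * nat * R, exists st,
            0 < snd p -> good_stage x eps (fst (fst p)) (snd (fst p)) (snd p) st).
  { intros [[i N] rho]. destruct (Rlt_dec 0 rho) as [Hr|Hr].
    - destruct (good_stage_exists x eps Hosc i N rho Hr) as [st Hst]. eauto.
    - exists (Stage O O O 0). simpl. lra. }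
  destruct (choice _ Hex) as [next Hnext]. set (st := build_stages next).
  assert (H0 : good_stage x eps O O 1 (st O)) by exact (Hnext (O, O, 1) Rlt_0_1).
  assert (Hstep : forall j, 0 < st_rad (st j) -> good_stage x eps (S j)
            (S (max (st_n (st j)) (st_m (st j)))) (st_rad (st j)) (st (S j)))
    by (intros j; exact (Hnext (S j, _, _))).
  assert (Hpos : forall j, 0 < st_rad (st j)).
  { intros j. induction j; [exact (gs_rad_pos _ _ _ _ _ _ H0)|].
    exact (gs_rad_pos _ _ _ _ _ _ (Hstep j IHj)). }
  assert (Hgood : forall i, exists N rho, good_stage x eps i N rho (st i)).
  { intros [|j]; eauto. }
  assert (Hnext_n : forall j, (st_n (st j) < st_n (st (S j)))%nat).
  { intros j. pose proof (gs_n_ge _ _ _ _ _ _ (Hstep j (Hpos j))). lia. }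
  assert (Hnext_m : forall j, (st_m (st j) < st_m (st (S j)))%nat).
  { intros j. pose proof (gs_m_ge _ _ _ _ _ _ (Hstep j (Hpos j))). lia. }
  exists (fun i => st_n (st i)), (fun i => st_m (st i) :: nil), (fun i => st_ball (st i)).
  constructor.
  - exact (strictly_increasing _ Hnext_n).
  - intros i. destruct (Hgood i) as (N & rho & Hg). exact (gs_n_in _ _ _ _ _ _ Hg).
  - intros i j Hij a b [<- | []] [<- | []]. exact (strictly_increasing _ Hnext_m i j Hij).
  - intros i a [<- | []]. destruct (Hgood i) as (N & rho & Hg). exact (gs_m_in _ _ _ _ _ _ Hg).
  - intros i z Hz. destruct (Hgood i) as (N & rho & Hg). apply (gs_inner _ _ _ _ _ _ Hg).
    exact (gs_outer _ _ _ _ _ _ (Hstep i (Hpos i)) z Hz).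
  - intros i. destruct (Hgood i) as (N & rho & Hg). exact (gs_diam _ _ _ _ _ _ Hg).
  - intros i z Hz. exists (st_m (st i)). split; [left; reflexivity|].
    destruct (Hgood i) as (N & rho & Hg). exact (gs_sep _ _ _ _ _ _ Hg z Hz).
Qed.

End Lemma5p10.

Theorem lemma5p10 (X : Type) (d : X -> X -> R) (Hmet : is_metric d)
  (Hcompl : complete d) (D : nat -> X) (HD : dense_seq d D)
  (B : nat -> X -> Prop) (HB : ball_enumeration d D B)
  (f : nat -> X -> R) (Hcont : forall n, continuous_on_metric d (f n))
  (Hrc : rel_compact_B1 d f)
  (L : nat -> Prop) (HL : infinite_set L) :
  converges_along f L <-> well_founded_tree (TL d B f L).
Proof.
  split.
  - intros Hconv Hbranch.
    apply TL_infinite_branch in Hbranch as (dd & s & t & w & Hbr).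
    exact (branch_diverges X d D B f L Hmet Hcompl HB dd s t w Hbr Hconv).
  - intros Hwf. apply NNPP. intros Hdiv.
    destruct (divergence_oscillates f L HL Hdiv) as (x & dd & Hosc).
    apply Hwf, TL_infinite_branch.
    destruct (oscillation_yields_branch X d D B f L Hmet HD HB Hcont x dd Hosc)
      as (s & t & w & Hbr).
    eauto.
Qed.
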